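(* Let $m\leq n$ be positive integers ($n$ finite). Then $\gamma_{gr}^{L,2}(P_m\Box P_n)=mn$.
   Context: $P_m$ is the path on $m$ vertices and $G\Box H$ is the Cartesian product: vertex set $V(G)\times V(H)$, with $(u,v)\sim(x,y)$ iff ($u=x$ and $vy\in E(H)$) or ($v=y$ and $ux\in E(G)$). For a vertex $v$, $N(v)$ is its open neighborhood and $N[v]=N(v)\cup\{v\}$. A sequence $S=(v_1,\ldots,v_r)$ of distinct vertices is a $2$-$L$-sequence if for each $i$ there is $u_i\in N[v_i]$ such that the number of indices $j<i$ with $u_i\in N(v_j)$ is less than $2$. $\gamma_{gr}^{L,2}(G)$ is the maximum length of a $2$-$L$-sequence of $G$. *)

From mathcomp Require Import all_boot all_order.
Set Implicit Arguments. Unset Strict Implicit. Unset Printing Implicit Defensive.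

(* A finite simple graph is given by a vertex type T : finType and a
   symmetric irreflexive adjacency relation adj : rel T. *)

Definition onbhd (T : finType) (adj : rel T) (v : T) : {set T} := [set u | adj v u].
Definition cnbhd (T : finType) (adj : rel T) (v : T) : {set T} := v |: onbhd adj v.

(* S = (v_1,...,v_r) is a 2-L-sequence: the v_i are distinct, and for each i
   there is u_i in N[v_i] such that the number of indices j < i with
   u_i in N(v_j) is less than 2.  (0-indexed: v_i = tnth (in_tuple s) i.) *)
Definition is_2L_seq (T : finType) (adj : rel T) (s : seq T) : bool :=
  uniq s &&
  [forall i : 'I_(size s),
     [exists u in cnbhd adj (tnth (in_tuple s) i),
        #|[set j : 'I_(size s) | (j < i) && (u \in onbhd adj (tnth (in_tuple s) j))]| < 2]].

(* gamma_gr^{L,2}(G): the maximum length of a 2-L-sequence of G.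
   (Lengths are at most #|T| since vertices are distinct; the empty
   sequence is always a 2-L-sequence.) *)
Definition gamma_L2 (T : finType) (adj : rel T) : nat :=
  \max_(k < #|T|.+1 | [exists s : k.-tuple T, is_2L_seq adj s]) k.

Definition path_adj (m : nat) : rel 'I_m := fun i j => (i.+1 == j :> nat) || (j.+1 == i :> nat).

Definition cart_adj (A B : finType) (eA : rel A) (eB : rel B) : rel (A * B) :=
  fun x y => ((x.1 == y.1) && eB x.2 y.2) || ((x.2 == y.2) && eA x.1 y.1).
Arguments path_adj : clear implicits.

From mathcomp Require Import all_boot all_order zify.

Set Implicit Arguments.
Unset Strict Implicit.
Unset Printing Implicit Defensive.

(* Enumerate the grid P_m □ P_n row by row, except that the last two vertices
   of the last row are taken in reverse order (listed last, the bottom-right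
   corner would in general violate the condition).  Every vertex v then has a
   vertex u in N[v] with at most one neighbour listed before v: the right
   neighbour of v (its only earlier neighbour lies above it), the vertex below
   v (at the end of a row; it has no earlier neighbour), or the bottom-right
   corner (its only earlier neighbour lies above it). *)

Section TwoLSequences.

Variables (T : finType) (adj : rel T).

Lemma gamma_L2_le_card : gamma_L2 adj <= #|T|.
Proof. by apply/bigmax_leqP => k _; rewrite -ltnS. Qed.

Lemma size_le_gamma_L2 (s : seq T) : is_2L_seq adj s -> size s <= gamma_L2 adj.
Proof.
move=> s2L; have /andP [s_uniq _] := s2L.
have size_s : size s < #|T|.+1 by rewrite ltnS -(card_uniqP s_uniq) max_card.
apply: (leq_bigmax_cond (Ordinal size_s)).
by apply/existsP; exists (in_tuple s).
Qed.

Variable rk : T -> nat.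
Hypothesis rk_inj : injective rk.

Definition rank_sort : seq T := sort (relpre rk leq) (enum T).

Lemma size_rank_sort : size rank_sort = #|T|.
Proof. by rewrite size_sort cardT. Qed.

Lemma rank_sort_uniq : uniq rank_sort.
Proof. by rewrite sort_uniq enum_uniq. Qed.

Lemma rank_sort_ltn x0 i j : i < j < size rank_sort ->
  rk (nth x0 rank_sort i) < rk (nth x0 rank_sort j).
Proof.
move=> /andP [lt_ij lt_j].
have sorted_rk : sorted ltn (map rk rank_sort).
  rewrite ltn_sorted_uniq_leq (map_inj_uniq rk_inj) rank_sort_uniq sorted_map.
  exact/sort_sorted/(fun x y => leq_total (rk x) (rk y)).
have lt_i : i < size rank_sort by apply: ltn_trans lt_j.
rewrite -!(nth_map x0 0) //.
by apply: (sorted_ltn_nth ltn_trans) => //; rewrite inE size_map.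
Qed.

Hypothesis few_earlier_nbrs : forall v, exists2 u, u \in cnbhd adj v &
  forall x y, adj x u -> adj y u -> rk x < rk v -> rk y < rk v -> x = y.

Lemma rank_sort_is_2L_seq : is_2L_seq adj rank_sort.
Proof.
rewrite /is_2L_seq rank_sort_uniq; apply/forallP => i.
pose x0 := tnth (in_tuple rank_sort) i.
have [u u_nbr earlier_eq] := few_earlier_nbrs (tnth (in_tuple rank_sort) i).
apply/existsP; exists u; rewrite u_nbr /=.
apply/card_le1_eqP => j1 j2; rewrite !inE => /andP [lt_j1 adj_j1] /andP [lt_j2 adj_j2].
apply/(tuple_uniqP (in_tuple rank_sort)); first exact: rank_sort_uniq.
apply: earlier_eq => //; rewrite !(tnth_nth x0) rank_sort_ltn //.
- by rewrite lt_j2 ltn_ord.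
- by rewrite lt_j1 ltn_ord.
Qed.

Theorem gamma_L2_eq_card : gamma_L2 adj = #|T|.
Proof.
apply/eqP; rewrite eqn_leq gamma_L2_le_card -size_rank_sort.
exact/size_le_gamma_L2/rank_sort_is_2L_seq.
Qed.

End TwoLSequences.

Section Grid.

Variables m n : nat.

Local Notation grid_adj := (cart_adj (path_adj m) (path_adj n)).

Lemma grid_adjE (x y : 'I_m * 'I_n) : grid_adj x y =
  ((x.1 == y.1 :> nat) && ((x.2.+1 == y.2 :> nat) || (y.2.+1 == x.2 :> nat)))
  || ((x.2 == y.2 :> nat) && ((x.1.+1 == y.1 :> nat) || (y.1.+1 == x.1 :> nat))).
Proof. by []. Qed.

Definition col_rank (last_row : bool) (b : nat) : nat :=
  if last_row then (if b == n.-1 then n.-2 else if b == n.-2 then n.-1 else b)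
  else b.

Definition grid_rank (x : 'I_m * 'I_n) : nat :=
  x.1 * n + col_rank (x.1 == m.-1 :> nat) x.2.

Lemma col_rank_lt last_row b : b < n -> col_rank last_row b < n.
Proof. by rewrite /col_rank; do ! case: ifP => /eqP; lia. Qed.

Lemma grid_rank_ltn (x y : 'I_m * 'I_n) : (grid_rank x < grid_rank y) =
  (x.1 < y.1) || (x.1 == y.1 :> nat) &&
  (col_rank (x.1 == m.-1 :> nat) x.2 < col_rank (y.1 == m.-1 :> nat) y.2).
Proof.
rewrite /grid_rank.
have := col_rank_lt (x.1 == m.-1 :> nat) (ltn_ord x.2).
have := col_rank_lt (y.1 == m.-1 :> nat) (ltn_ord y.2).
case: (ltngtP x.1 y.1) => [lt_xy|lt_yx|->]; last lia.
- have : x.1.+1 * n <= y.1 * n by rewrite leq_mul2r lt_xy orbT.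
  rewrite mulSn; lia.
- have : y.1.+1 * n <= x.1 * n by rewrite leq_mul2r lt_yx orbT.
  rewrite mulSn; lia.
Qed.

Lemma grid_rank_inj : injective grid_rank.
Proof.
move=> x y eq_xy.
have := grid_rank_ltn x y; have := grid_rank_ltn y x; rewrite eq_xy ltnn.
case: x y {eq_xy} => [[a ha] [b hb]] [[c hc] [d hd]] /= ltn_yx ltn_xy.
suff [eq_ac eq_bd] : a = c /\ b = d by subst; congr pair; apply: val_inj.
by move: ltn_yx ltn_xy; rewrite /col_rank; do ! case: ifP => /eqP; lia.
Qed.

Lemma grid_earlier_nbrs_coords (v : 'I_m * 'I_n) :
  exists2 u, u \in cnbhd grid_adj v & exists w1 w2 : nat,
    forall x, grid_adj x u -> grid_rank x < grid_rank v ->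
      (x.1 : nat) = w1 /\ (x.2 : nat) = w2.
Proof.
case: v => [[a ha] [b hb]].
have [right_nbr|] := boolP ((a < m.-1) && (b < n.-1) || (b.+1 < n.-1)).
  have hb1 : b.+1 < n by lia.
  exists (Ordinal ha, Ordinal hb1); first by rewrite !inE grid_adjE /=; lia.
  exists a.-1, b.+1 => -[[x1 hx1] [x2 hx2]].
  by rewrite grid_adjE grid_rank_ltn /col_rank /=; do ! case: ifP => /eqP; lia.
move=> end_of_row; have [not_last_row|last_row] := boolP (a < m.-1).
  have ha1 : a.+1 < m by lia.
  exists (Ordinal ha1, Ordinal hb); first by rewrite !inE grid_adjE /=; lia.
  exists 0, 0 => -[[x1 hx1] [x2 hx2]].
  by rewrite grid_adjE grid_rank_ltn /col_rank /=; do ! case: ifP => /eqP; lia.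
have hn : n.-1 < n by lia.
exists (Ordinal ha, Ordinal hn).
  by rewrite !inE xpair_eqE grid_adjE /= -!val_eqE /=; lia.
exists a.-1, n.-1 => -[[x1 hx1] [x2 hx2]].
by rewrite grid_adjE grid_rank_ltn /col_rank /=; do ! case: ifP => /eqP; lia.
Qed.

Lemma grid_few_earlier_nbrs (v : 'I_m * 'I_n) : exists2 u, u \in cnbhd grid_adj v &
  forall x y, grid_adj x u -> grid_adj y u ->
    grid_rank x < grid_rank v -> grid_rank y < grid_rank v -> x = y.
Proof.
have [u u_nbr [w1 [w2 earlier]]] := grid_earlier_nbrs_coords v.
exists u => // x y adj_x adj_y lt_x lt_y.
have [x1E x2E] := earlier x adj_x lt_x; have [y1E y2E] := earlier y adj_y lt_y.
case: x y {adj_x adj_y lt_x lt_y earlier} x1E x2E y1E y2E => [x1 x2] [y1 y2] /=.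
by move=> x1E x2E y1E y2E; congr pair; apply: val_inj; rewrite /= ?x1E ?x2E ?y1E ?y2E.
Qed.

Theorem gamma_L2_grid : gamma_L2 grid_adj = m * n.
Proof.
rewrite (gamma_L2_eq_card grid_rank_inj grid_few_earlier_nbrs).
by rewrite card_prod !card_ord.
Qed.

End Grid.

Theorem mainTheorem14 (m n : nat) (hm : 0 < m) (hmn : m <= n) :
  gamma_L2 (cart_adj (path_adj m) (path_adj n)) = m * n.
Proof. exact: gamma_L2_grid. Qed.
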